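(* In the synchronous unauthenticated setting with $n$ parties of which at most $t=\lfloor (n-1)/3\rfloor$ are Byzantine and a computationally unbounded adversary, the protocol ''Synchronous Error-free $\frac{n}{3}$-BA'' described in the context, run on $l$-bit inputs, satisfies Termination, Agreement and Validity of Byzantine agreement (with probability $1$), and has communication complexity $O(nl+n^3+n\mathcal{B}(1))$.
   Context: Model: $n$ parties connected pairwise by reliable authenticated (point-to-point) channels, synchronous; a static, computationally unbounded adversary corrupts up to $t$ parties (Byzantine). No cryptography is used. Communication complexity = worst-case total bits sent by honest parties. Byzantine agreement: each $P_i$ holds an $l$-bit input $m_i$; Termination: every honest party outputs; Agreement: honest outputs equal; Validity: if all honest inputs equal $m$, honest parties output $m$. A single-bit Byzantine broadcast oracle lets a sender broadcast one bit so that all honest parties deliver the same bit, equal to the sender's if the sender is honest; its cost is $\mathcal{B}(1)$. Reed–Solomon $(n,t+1)$ code: $\texttt{ENC}$ maps $t+1$ data symbols to $n$ codeword symbols, any $t+1$ of which determine the data; $\texttt{DEC}$ corrects $c$ errors and $d$ erasures iff $n-(t+1)\ge 2c+d$. $(n,t)$-star of an undirected graph $G$ on vertex set $\mathcal{P}=\{P_1,\dots,P_n\}$: a pair $(\mathcal{C},\mathcal{D})$ with $\mathcal{C}\subseteq\mathcal{D}\subseteq\mathcal{P}$, $|\mathcal{C}|\ge n-2t$, $|\mathcal{D}|\ge n-t$, and every $P_i\in\mathcal{C}$, $P_j\in\mathcal{D}$ adjacent. Procedure $\texttt{STAR}(G)$: let $H$ be the complement of $G$ with edge set $\bar E$; compute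 a maximum matching $M$ of $H$ by a fixed deterministic algorithm; $N$ = matched vertices, $\bar N=\mathcal{P}\setminus N$; $T=\{P_i\in\bar N:\exists (P_j,P_k)\in M,\ (P_i,P_j),(P_i,P_k)\in\bar E\}$; $\mathcal{C}=\bar N\setminus T$; $B=\{P_j\in N:\exists P_k\in\mathcal{C},\ (P_j,P_k)\in\bar E\}$; $\mathcal{D}=\mathcal{P}\setminus B$; output $(\mathcal{C},\mathcal{D})$ if $|\mathcal{C}|\ge n-2t$ and $|\mathcal{D}|\ge n-t$, else output noSTAR. Protocol for $P_i$: (1) Split $m_i$ into $t+1$ blocks of $l/(t+1)$ bits, compute $(s_{i1},\dots,s_{in})=\texttt{ENC}(\text{blocks})$; send $s_{ii}$ to every party and $s_{ij}$ to $P_j$ for each $j$. (2) Form a bit vector $v_i$ of length $n$ with $v_i[j]=1$ iff $s_{ij}=s_{jj}$ and $s_{ii}=s_{ji}$, where $s_{jj}$ and $s_{ji}$ are the values received from $P_j$ in step 1; send $v_i$ to every party. (3) Build graph $G_i$ on $\mathcal{P}$ with edge $(P_x,P_y)$ iff $v_x[y]=v_y[x]=1$ (using the vectors as received by $P_i$), and run $\texttt{STAR}(G_i)$. (4) If it returns $(\mathcal{C}_i,\mathcal{D}_i)$, let $\mathcal{F}_i$ be the set of parties with at least $t+1$ neighbours in $\mathcal{C}_i$ and $\mathcal{E}_i$ the set of parties with at least $2t+1$ neighbours in $\mathcal{F}_i$ (each party counted as its own neighbour); if $|\mathcal{F}_i|\ge 2t+1$ and $|\mathcal{E}_i|\ge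 2t+1$ keep $\mathcal{E}_i$, otherwise (or if noSTAR) set $\mathcal{E}_i=\emptyset$. (5) If $\mathcal{E}_i\ne\emptyset$, broadcast bit $1$ with the single-bit BB oracle and send $\mathcal{E}_i$ as an $n$-bit vector to every party; otherwise broadcast bit $0$. (6) If at least $2t+1$ of these broadcasts deliver $1$: let $\mathbf{E}$ be the sets $\mathcal{E}_x$ received; for each $\mathcal{E}_x\in\mathbf{E}$ let $maj_x$ be a value $v$ with $|\{j\in\mathcal{E}_x: s_{ji}=v\}|\ge\lceil(|\mathcal{E}_x|+1)/2\rceil$ ($s_{ji}$ = value received from $P_j$ in step 1), or $\bot$ if none; find $\mathbf{E}'\subseteq\mathbf{E}$ with $|\mathbf{E}'|\ge t+1$ whose $maj_x$ are all equal to a common value $maj\ne\bot$, and send $maj$ to every party. If fewer than $2t+1$ broadcasts deliver $1$, output a predefined $l$-bit message $m'$ and abort. (7) With $maj_j$ the value received from $P_j$ in step 6, apply $\texttt{DEC}$ to $(maj_1,\dots,maj_n)$ with $c=t$, $d=0$ and output the concatenation of the decoded blocks. *)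

From mathcomp Require Import all_boot all_order all_algebra.

Set Implicit Arguments.
Unset Strict Implicit.
Unset Printing Implicit Defensive.

Import GRing.Theory.

Definition tB (n : nat) : nat := n.-1 %/ 3.

(* Since the protocol is deterministic, every execution against
   every (rushing, computationally unbounded) adversary is determined by the
   values the corrupt parties send; conversely every choice of values is
   realised by some adversary.  [a1 x y] is what corrupt [x] sends to [y] in
   step 1 (claimed (s_xx, s_xy)), [a2 x y] the vector of step 2, [abb x] the
   bit delivered (to all honest parties alike) by the single-bit BB oracle
   for corrupt sender [x], [a5 x y] the set E_x sent in step 5 and [a6 x y]
   the value maj sent in step 6. *)
Record adversary (n : nat) (F : Type) := Adversary {
  a1 : 'I_n -> 'I_n -> F * F;
  a2 : 'I_n -> 'I_n -> {ffun 'I_n -> bool};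
  abb : 'I_n -> bool;
  a5 : 'I_n -> 'I_n -> {set 'I_n};
  a6 : 'I_n -> 'I_n -> F
}.

Definition is_matching (n : nat) (E : rel 'I_n) (M : {set 'I_n * 'I_n}) : bool :=
  [forall e in M, (nat_of_ord e.1 < nat_of_ord e.2)%N && E e.1 e.2] &&
  [forall e in M, forall e' in M,
     (e != e') ==> [disjoint [set e.1; e.2] & [set e'.1; e'.2]]].

Definition is_max_matching (n : nat) (E : rel 'I_n) (M : {set 'I_n * 'I_n}) : Prop :=
  is_matching E M /\ forall M', is_matching E M' -> #|M'| <= #|M|.

(* Procedure STAR(G), G given by a (reflexive, symmetric) adjacency relation;
   [mm] is the fixed deterministic maximum-matching algorithm. *)
Definition STAR (n : nat) (mm : rel 'I_n -> {set 'I_n * 'I_n}) (G : rel 'I_n)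
  : option ({set 'I_n} * {set 'I_n}) :=
  let t := tB n in
  let Eb := fun x y => ~~ G x y in
  let M := mm Eb in
  let N := [set x | [exists e in M, (e.1 == x) || (e.2 == x)]] in
  let Nb := ~: N in
  let T := [set x in Nb | [exists e in M, Eb x e.1 && Eb x e.2]] in
  let C := Nb :\: T in
  let B := [set j in N | [exists k in C, Eb j k]] in
  let D := ~: B in
  if (n - 2 * t <= #|C|) && (n - t <= #|D|) then Some (C, D) else None.

Section Protocol.

Variable n : nat.
Local Notation t := (tB n).
Local Notation party := 'I_n.
Variable b : nat.                         (* bits per block/symbol: l/(t+1) *)
Variable F : finFieldType.                (* symbol field of the RS code *)
Variable alpha : party -> F.              (* evaluation points *)
Variable rep : F -> b.-tuple bool.
Variable unrep : b.-tuple bool -> F.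
Local Notation l := (t.+1 * b).
Local Notation msg := (l.-tuple bool).
Variable mdef : msg.
Variable mm : rel party -> {set party * party}.

Definition ENC (d : {ffun 'I_t.+1 -> F}) : {ffun party -> F} :=
  [ffun j => \sum_(k < t.+1) d k * alpha j ^+ k]%R.

Definition hdist (u w : {ffun party -> F}) : nat := #|[set j | u j != w j]|.

(* DEC with c = t errors and d = 0 erasures: the data whose codeword is
   within Hamming distance t of the received word. *)
Definition DEC (w : {ffun party -> F}) : {ffun 'I_t.+1 -> F} :=
  if [pick d : {ffun 'I_t.+1 -> F} | hdist (ENC d) w <= t] is Some d then d
  else [ffun => 0%R].

Definition blocks (m : msg) : {ffun 'I_t.+1 -> F} :=
  [ffun k : 'I_t.+1 => unrep [tuple nth false m (k * b + j) | j < b]].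

Definition concat (d : {ffun 'I_t.+1 -> F}) : msg :=
  [tuple nth false (rep (d (inord (i %/ b)))) (i %% b) | i < l].

Variable m : party -> msg.
Variable Cr : {set party}.
Variable A : adversary n F.

(* Step 1 *)
Definition share (i : party) : {ffun party -> F} := ENC (blocks (m i)).
(* what P_i receives from P_j in step 1: (s_jj, s_ji) *)
Definition recv1 (i j : party) : F * F :=
  if j \in Cr then a1 A j i else (share j j, share j i).
Definition rs (i j : party) : F := (recv1 i j).2.   (* s_ji as received by P_i *)
Definition rd (i j : party) : F := (recv1 i j).1.   (* s_jj as received by P_i *)

(* Step 2 *)
Definition vec (i : party) : {ffun party -> bool} :=
  [ffun j => (share i j == rd i j) && (share i i == rs i j)].
Definition recv2 (i x : party) : {ffun party -> bool} :=
  if x \in Cr then a2 A x i else vec x.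

(* Step 3: the graph G_i (every party adjacent to itself) *)
Definition adj (i : party) : rel party :=
  fun x y => (x == y) || (recv2 i x y && recv2 i y x).

(* Step 4 *)
Definition Ecal (i : party) : {set party} :=
  match STAR mm (adj i) with
  | Some (C, _) =>
      let Fs := [set x | t.+1 <= #|[set y in C | adj i x y]|] in
      let Es := [set x | (2 * t).+1 <= #|[set y in Fs | adj i x y]|] in
      if ((2 * t).+1 <= #|Fs|) && ((2 * t).+1 <= #|Es|) then Es else set0
  | None => set0
  end.

(* Step 5 *)
Definition bit (i : party) : bool := Ecal i != set0.
Definition bb (x : party) : bool := if x \in Cr then abb A x else bit x.
Definition send5 (i : party) : option {set party} :=
  if bit i then Some (Ecal i) else None.
Definition recv5 (i x : party) : {set party} :=
  if x \in Cr then a5 A x i else odflt set0 (send5 x).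

(* Step 6 *)
Definition proceed : bool := (2 * t).+1 <= #|[set x | bb x]|.
Definition majx (i x : party) : option F :=
  let Ex := recv5 i x in
  [pick v : F | (#|Ex| + 2) %/ 2 <= #|[set j in Ex | rs i j == v]|].
Definition majv (i : party) : option F :=
  [pick v : F | t.+1 <= #|[set x | bb x && (majx i x == Some v)]|].
Definition send6 (i : party) : option F :=
  if proceed then Some (odflt 0%R (majv i)) else None.
Definition recv6 (i j : party) : F :=
  if j \in Cr then a6 A j i else odflt 0%R (send6 j).

(* Step 7 / output of P_i *)
Definition output (i : party) : msg :=
  if proceed then concat (DEC [ffun j => recv6 i j]) else mdef.

(* Communication complexity: bits sent by honest parties over the
   point-to-point channels (each message to each of the n parties), plus
   cost B1 = B(1) for each of the n invocations of the single-bit BB. *)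
Variable B1 : nat.
Definition honest_bits (i : party) : nat :=
  n * (2 * b)                                            (* step 1 *)
  + n * n                                                (* step 2 *)
  + n * (if send5 i is Some _ then n else 0)             (* step 5 *)
  + n * (if send6 i is Some _ then b else 0).            (* step 6 *)
Definition comm_cost : nat := n * B1 + \sum_(i in ~: Cr) honest_bits i.

End Protocol.

(** Honest parties never misreport their own codeword, so an edge of any
    graph G_i between two honest parties means that their codewords agree at
    both of their positions.  If an honest P_i finds a star (C, D), every
    honest member of C agrees with every honest member of D, so the honest
    members of C share one codeword; through F_i this codeword reaches every
    honest member of E_i.  Two honest parties cannot end up with different
    codewords: off the at most t positions where these codewords agree, the
    honest parts of their E-sets are pairwise non-adjacent, which yields a
    matching of size t+1 in the complement of G_i, whereas the size of C_i
    together with the maximality of STAR's matching bounds every such matching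
    by t.  Hence all honest majority values are coordinates of a single
    codeword, which t-error decoding recovers.  When all honest inputs agree,
    the honest parties form a clique of size n - t, on which STAR always
    succeeds, so every honest party broadcasts 1. *)

From Pilot Require Import Defs.
From mathcomp Require Import all_boot all_order all_algebra zify.

Set Implicit Arguments.
Unset Strict Implicit.
Unset Printing Implicit Defensive.

Import GRing.Theory.

Section FinsetFacts.
Variable T : finType.
Implicit Types A B C : {set T}.

Lemma leq_sub_cardsD A B : #|A| - #|B| <= #|A :\: B|.
Proof. by rewrite cardsD leq_sub2l // subset_leq_card ?subsetIr. Qed.

Lemma card_lt_exists A B : #|B| < #|A| -> exists2 x, x \in A & x \notin B.
Proof.
move=> ltBA; have /card_gt0P[x] : 0 < #|A :\: B|.
  by apply: leq_trans (leq_sub_cardsD A B); rewrite subn_gt0.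
by rewrite inE => /andP[]; exists x.
Qed.

Lemma leq_card_in_sub (T' : finType) (f : T -> T') A (B : {set T'}) :
  {in A &, injective f} -> {in A, forall x, f x \in B} -> #|A| <= #|B|.
Proof.
move=> f_inj fAB; rewrite -(card_in_imset f_inj) subset_leq_card //.
by apply/subsetP => _ /imsetP[x xA ->]; exact: fAB.
Qed.

Lemma leq_cardsD_disjoint A B C : [disjoint A & B] ->
  #|A| + #|B| <= #|A :\: C| + #|B :\: C| + #|C|.
Proof.
move=> dAB; rewrite !cardsD.
have dAC_BC : [disjoint A :&: C & B :&: C] by apply: disjointW dAB; apply: subsetIl.
have subC : (A :&: C) :|: (B :&: C) \subset C by rewrite subUset !subsetIr.
have := cardsUI (A :&: C) (B :&: C); rewrite (disjoint_setI0 dAC_BC) cards0 addn0.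
have := subset_leq_card subC.
have := subset_leq_card (subsetIl A C); have := subset_leq_card (subsetIl B C); lia.
Qed.

End FinsetFacts.

Lemma pick_majority (T V : finType) (S : {set T}) (f : T -> V) v :
  (#|S| + 2) %/ 2 <= #|[set j in S | f j == v]| ->
  [pick w | (#|S| + 2) %/ 2 <= #|[set j in S | f j == w]|] = Some v.
Proof.
move=> maj_v; case: pickP => [w maj_w | none]; last by move: (none v); rewrite /= maj_v.
congr Some; apply/eqP/negPn/negP => neq_wv.
set Sw := [set j in S | f j == w] in maj_w *; set Sv := [set j in S | f j == v] in maj_v *.
have disj : [disjoint Sw & Sv].
  rewrite -setI_eq0; apply/eqP/setP => j; rewrite !inE.
  by apply/negbTE/andP => -[/andP[_ /eqP ->] /andP[_ wv]]; rewrite wv in neq_wv.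
have sub : Sw :|: Sv \subset S by apply/subsetP => j; rewrite !inE => /orP[] /andP[].
have := subset_leq_card sub; have := cardsUI Sw Sv.
rewrite (disjoint_setI0 disj) cards0 addn0.
have := divn_eq (#|S| + 2) 2; have := ltn_pmod (#|S| + 2) (isT : 0 < 2); lia.
Qed.

(** * Matchings *)

Section Matching.
Variables (n : nat) (E : rel 'I_n).
Hypothesis E_sym : symmetric E.
Implicit Types (M : {set 'I_n * 'I_n}) (e : 'I_n * 'I_n) (v w x y : 'I_n).

Definition incident e v := (e.1 == v) || (e.2 == v).

Lemma incident_fst e : incident e e.1.
Proof. by rewrite /incident eqxx. Qed.

Lemma incident_snd e : incident e e.2.
Proof. by rewrite /incident eqxx orbT. Qed.

Definition matching M : Prop :=
  (forall e, e \in M -> e.1 < e.2 /\ E e.1 e.2) /\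
  (forall e e' v, e \in M -> e' \in M -> incident e v -> incident e' v -> e = e').

Lemma disjoint_endsP e e' :
  reflect (forall v, incident e v -> incident e' v -> False)
          [disjoint [set e.1; e.2] & [set e'.1; e'.2]].
Proof.
have endsE f v : (v \in [set f.1; f.2]) = incident f v.
  by rewrite !inE /incident ![v == _]eq_sym.
rewrite disjoints_subset; apply: (iffP subsetP) => [sub v ev e'v | noc v].
  by move: (sub v); rewrite in_setC !endsE ev e'v => /(_ isT).
by rewrite in_setC !endsE => ev; apply/negP => /(noc v ev).
Qed.

Lemma is_matchingP M : reflect (matching M) (is_matching E M).
Proof.
apply: (iffP andP) => [[/forallP edges /forallP disj] | [edges disj]]; split.
- by move=> e eM; move/implyP/(_ eM)/andP: (edges e).
- move=> e e' v eM e'M ev e'v; apply/eqP/negPn/negP => ne.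
  move/implyP/(_ eM)/forallP/(_ e')/implyP/(_ e'M)/implyP/(_ ne): (disj e).
  by move/disjoint_endsP/(_ v ev e'v).
- by apply/forallP => e; apply/implyP => /edges[-> ->].
- apply/forallP => e; apply/implyP => eM; apply/forallP => e'; apply/implyP => e'M.
  apply/implyP => ne; apply/disjoint_endsP => v ev e'v.
  by move/eqP: ne; apply; exact: disj ev e'v.
Qed.

Lemma matching_uniq M e e' v :
  matching M -> e \in M -> e' \in M -> incident e v -> incident e' v -> e = e'.
Proof. by case=> _; apply. Qed.

Lemma matching_edge_neq M e : matching M -> e \in M -> e.1 != e.2.
Proof. by case=> edges _ /edges[lt12 _]; rewrite neq_ltn lt12. Qed.

Lemma matching_sub M M' : M' \subset M -> matching M -> matching M'.
Proof.
move=> /subsetP sM'M [edges disj].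
by split=> [e /sM'M /edges // | e e' v /sM'M eM /sM'M e'M]; exact: disj.
Qed.

Definition matched M := [set v | [exists e in M, incident e v]].

Lemma matchedP M v : reflect (exists2 e, e \in M & incident e v) (v \in matched M).
Proof.
rewrite inE; apply: (iffP existsP) => [[e /andP[]] | [e eM ev]]; first by exists e.
by exists e; rewrite eM.
Qed.

Lemma unmatched_incident M e v : v \notin matched M -> e \in M -> incident e v = false.
Proof. by move=> vM eM; apply/negP => ev; case/negP: vM; apply/matchedP; exists e. Qed.

Lemma unmatched_neq M v w : v \notin matched M -> w \in matched M -> v != w.
Proof. by move=> vM; apply: contraTneq => <-. Qed.

Lemma matched_sub M M' : M' \subset M -> matched M' \subset matched M.
Proof.
move=> /subsetP sM'M; apply/subsetP => v /matchedP[e /sM'M eM ev].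
by apply/matchedP; exists e.
Qed.

Lemma matched_setD1 M e v : matching M -> e \in M -> incident e v ->
  v \notin matched (M :\ e).
Proof.
move=> Mm eM ev; apply/matchedP => -[e']; rewrite in_setD1 => /andP[ne' e'M] e'v.
by rewrite (matching_uniq Mm e'M eM e'v ev) eqxx in ne'.
Qed.

Definition edge x y := if x < y then (x, y) else (y, x).

Lemma incident_edge x y v : incident (edge x y) v = (x == v) || (y == v).
Proof. by rewrite /edge /incident; case: ifP => //= _; rewrite orbC. Qed.

Lemma matched_setU1_edge M x y :
  matched (edge x y |: M) = [set x; y] :|: matched M.
Proof.
apply/setP => v; rewrite in_setU in_set2; apply/matchedP/idP.
  case=> e; rewrite in_setU1 => /orP[/eqP -> | eM ev].
    by rewrite incident_edge ![_ == v]eq_sym => ->.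
  by apply/orP; right; apply/matchedP; exists e.
case/orP => [xyv | /matchedP[e eM ev]]; last by exists e; rewrite // in_setU1 eM orbT.
by exists (edge x y); rewrite ?setU11 // incident_edge ![_ == v]eq_sym.
Qed.

Lemma matching_setU1_edge M x y : matching M -> x != y -> E x y ->
  x \notin matched M -> y \notin matched M -> matching (edge x y |: M).
Proof.
move=> [edges disj] neq_xy Exy xM yM; split.
  move=> e; rewrite in_setU1 => /orP[/eqP -> | /edges //].
  rewrite /edge; case: (ltngtP x y) => [lt_xy | lt_yx | /val_inj eq_xy] /=.
  - by [].
  - by rewrite lt_yx E_sym.
  - by rewrite eq_xy eqxx in neq_xy.
have fresh e v : e \in M -> incident (edge x y) v -> incident e v -> False.
  move=> eM; rewrite incident_edge => /orP[] /eqP <-.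
    by rewrite (unmatched_incident xM eM).
  by rewrite (unmatched_incident yM eM).
move=> e e' v; rewrite !in_setU1 => /orP[/eqP -> | eM] /orP[/eqP -> | e'M] // ev e'v.
- by case: (fresh e' v e'M ev e'v).
- by case: (fresh e v eM e'v ev).
- exact: disj ev e'v.
Qed.

Lemma card_setU1_edge M x y :
  x \notin matched M -> #|edge x y |: M| = #|M|.+1.
Proof.
move=> xM; rewrite cardsU1; case: (boolP (edge x y \in M)) => // exyM.
by move: (unmatched_incident xM exyM); rewrite incident_edge eqxx.
Qed.

Lemma card_matched M : matching M -> 2 * #|M| <= #|matched M|.
Proof.
move=> Mm.
have end_inj (p : 'I_n * 'I_n -> 'I_n) :
    (forall e, incident e (p e)) -> {in M &, injective p}.
  by move=> pe e e' eM e'M pee'; apply: (matching_uniq Mm eM e'M (pe e)); rewrite pee'.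
have inj1 : {in M &, injective fst} := end_inj _ incident_fst.
have inj2 : {in M &, injective snd} := end_inj _ incident_snd.
have disj12 : [disjoint fst @: M & snd @: M].
  rewrite -setI_eq0; apply/eqP/setP => v; rewrite !inE.
  apply/negbTE/andP => -[/imsetP[e eM ->] /imsetP[e' e'M eq12]].
  have ee' : e = e'.
    by apply: (matching_uniq Mm eM e'M (incident_fst e)); rewrite eq12 incident_snd.
  by move: (matching_edge_neq Mm eM); rewrite {2}ee' -eq12 eqxx.
rewrite mul2n -addnn -{1}(card_in_imset inj1) -(card_in_imset inj2) -cardsUI.
rewrite (disjoint_setI0 disj12) cards0 addn0 subset_leq_card //.
apply/subsetP => v; rewrite in_setU => /orP[] /imsetP[e eM ->]; apply/matchedP.
  by exists e; rewrite ?incident_fst.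
by exists e; rewrite ?incident_snd.
Qed.

Lemma max_matching_matching M : is_max_matching E M -> matching M.
Proof. by case=> /is_matchingP. Qed.

Lemma max_matching_card M M' : is_max_matching E M -> matching M' -> #|M'| <= #|M|.
Proof. by case=> _ Mmax /is_matchingP; exact: Mmax. Qed.

Lemma max_matching_unmatched_edge M x y : is_max_matching E M ->
  x \notin matched M -> y \notin matched M -> x != y -> ~~ E x y.
Proof.
move=> Mmax xM yM neq_xy; apply/negP => Exy.
have Mm := max_matching_matching Mmax.
have := max_matching_card Mmax (matching_setU1_edge Mm neq_xy Exy xM yM).
by rewrite card_setU1_edge // ltnn.
Qed.

(* Replacing e by the two edges (x, e.1) and (y, e.2) would enlarge M. *)
Lemma max_matching_no_augmenting_path M e x y : is_max_matching E M -> e \in M ->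
  x \notin matched M -> y \notin matched M -> x != y -> E x e.1 -> E y e.2 -> False.
Proof.
move=> Mmax eM xM yM neq_xy Exe1 Eye2.
have Mm := max_matching_matching Mmax.
have e1M : e.1 \in matched M by apply/matchedP; exists e; rewrite ?incident_fst.
have e2M : e.2 \in matched M by apply/matchedP; exists e; rewrite ?incident_snd.
set M1 := M :\ e.
have M1m : matching M1 := matching_sub (subD1set M e) Mm.
have unM1 v : v \notin matched M -> v \notin matched M1.
  by apply: contra; apply/subsetP/matched_sub/subD1set.
have e1M1 : e.1 \notin matched M1 := matched_setD1 Mm eM (incident_fst e).
have e2M1 : e.2 \notin matched M1 := matched_setD1 Mm eM (incident_snd e).
set M2 := edge y e.2 |: M1.
have M2m : matching M2.
  exact: matching_setU1_edge M1m (unmatched_neq yM e2M) Eye2 (unM1 _ yM) e2M1.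
have xM2 : x \notin matched M2.
  rewrite matched_setU1_edge in_setU in_set2 (negbTE (unM1 _ xM)) orbF.
  by rewrite (negbTE neq_xy) (negbTE (unmatched_neq xM e2M)).
have e1M2 : e.1 \notin matched M2.
  rewrite matched_setU1_edge in_setU in_set2 (negbTE e1M1) orbF eq_sym.
  by rewrite (negbTE (unmatched_neq yM e1M)) (negbTE (matching_edge_neq Mm eM)).
have := max_matching_card Mmax
  (matching_setU1_edge M2m (unmatched_neq xM e1M) Exe1 xM2 e1M2).
by rewrite !card_setU1_edge ?unM1 // [#|M|](cardsD1 e) eM ltnn.
Qed.

Definition partner M v :=
  if [pick e in M | incident e v] is Some e then (if e.1 == v then e.2 else e.1)
  else v.

Lemma partner_edge M v : matching M -> v \in matched M ->
  exists2 e, e \in M & e = (v, partner M v) \/ e = (partner M v, v).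
Proof.
move=> Mm /matchedP[e0 e0M e0v]; rewrite /partner.
case: pickP => [[a b] /andP[eM] | none]; last by move: (none e0); rewrite /= e0M e0v.
rewrite /incident /=; case: eqP => [<- | _ /eqP <-]; exists (a, b) => //.
  by left.
by right.
Qed.

Lemma partner_incident M v e : e = (v, partner M v) \/ e = (partner M v, v) ->
  incident e v /\ incident e (partner M v).
Proof. by case=> ->; rewrite /incident /= !eqxx ?orbT. Qed.

Lemma partner_adj M v : matching M -> v \in matched M -> E v (partner M v).
Proof.
move=> Mm /(partner_edge Mm)[e /(proj1 Mm)[_ Ee]].
by case=> def_e; move: Ee; rewrite def_e //= E_sym.
Qed.

Lemma partner_neq M v : matching M -> v \in matched M -> partner M v != v.
Proof.
move=> Mm /(partner_edge Mm)[e /(matching_edge_neq Mm) neq_e].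
by case=> def_e; move: neq_e; rewrite def_e //= eq_sym.
Qed.

Lemma partner_inj M : matching M -> {in matched M &, injective (partner M)}.
Proof.
move=> Mm v1 v2 v1M v2M eq_p.
have [e1 e1M def_e1] := partner_edge Mm v1M.
have [e2 e2M def_e2] := partner_edge Mm v2M.
have [_ e1p] := partner_incident def_e1; have [_ e2p] := partner_incident def_e2.
rewrite -eq_p in e2p def_e2; move: def_e2.
rewrite -(matching_uniq Mm e1M e2M e1p e2p); have neq1 := partner_neq Mm v1M.
by case: def_e1 => -> [] [] // => [eq_v1 _ | _ eq_v1]; rewrite -eq_v1 eqxx in neq1.
Qed.

Lemma matching_setU1_across M (X Y : {set 'I_n}) x y : [disjoint X & Y] ->
  x \in X -> y \in Y -> E x y -> matching M ->
  matched M \subset (X :\ x) :|: (Y :\ y) ->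
  [/\ matching (edge x y |: M), #|edge x y |: M| = #|M|.+1
    & matched (edge x y |: M) \subset X :|: Y].
Proof.
move=> dXY xX yY Exy Mm subM.
have xY := disjointFr dXY xX; have yX := disjointFl dXY yY.
have xM : x \notin matched M.
  by apply/negP => /(subsetP subM); rewrite in_setU !in_setD1 eqxx xY andbF.
have yM : y \notin matched M.
  by apply/negP => /(subsetP subM); rewrite in_setU !in_setD1 eqxx yX andbF.
have neq_xy : x != y by apply: contraFneq xY => ->.
split; [exact: matching_setU1_edge | exact: card_setU1_edge |].
rewrite matched_setU1_edge subUset; apply/andP; split.
  by apply/subsetP => v /set2P[] ->; rewrite in_setU ?xX ?yY ?orbT.
by apply: subset_trans subM _; apply: setUSS; apply: subD1set.
Qed.

(* Greedy construction: each new edge takes an endpoint outside Z from X or Y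
   and, whenever possible, its other endpoint inside Z. *)
Lemma matching_across (Z : {set 'I_n}) k : forall X Y : {set 'I_n},
  [disjoint X & Y] ->
  {in X & Y, forall p q, (p \notin Z) || (q \notin Z) -> E p q} ->
  k <= #|X| -> k <= #|Y| -> k <= #|X :\: Z| + #|Y :\: Z| ->
  exists2 M, matching M & #|M| = k /\ matched M \subset X :|: Y.
Proof.
elim: k => [|k IHk] X Y dXY EXY kX kY kZ.
  exists set0; first by split=> [e | e e' v]; rewrite inE.
  by rewrite cards0; split=> //; apply/subsetP => v /matchedP[e]; rewrite inE.
have step x y : x \in X -> y \in Y -> (x \notin Z) || (y \notin Z) ->
    k <= #|(X :\ x) :\: Z| + #|(Y :\ y) :\: Z| ->
    exists2 M, matching M & #|M| = k.+1 /\ matched M \subset X :|: Y.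
  move=> xX yY xyZ kZ'.
  have [|p q /setD1P[_ pX] /setD1P[_ qY]|||M0 M0m [cardM0 subM0]] :=
    IHk (X :\ x) (Y :\ y) _ _ _ _ kZ'.
  - exact: disjointW (subD1set X x) (subD1set Y y) dXY.
  - exact: EXY.
  - by move: kX; rewrite [#|X|](cardsD1 x) xX.
  - by move: kY; rewrite [#|Y|](cardsD1 y) yY.
  have [Mm cardM subM] := matching_setU1_across dXY xX yY (EXY x y xX yY xyZ) M0m subM0.
  by exists (edge x y |: M0); rewrite // cardM cardM0.
have cardDZ (A : {set 'I_n}) (a : 'I_n) :
    #|A :\: Z| = (a \in A :\: Z) + #|(A :\ a) :\: Z|.
  by rewrite [LHS](cardsD1 a) !setDDl setUC.
case: (set_0Vmem (X :\: Z)) => [XZ0 | [x xXZ]].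
  have /card_gt0P[x xX] : 0 < #|X| by apply: leq_trans kX.
  have /card_gt0P[y yYZ] : 0 < #|Y :\: Z|.
    by move: kZ; rewrite XZ0 cards0 add0n; apply: leq_trans.
  have /setDP[yY yZ] := yYZ.
  apply: (step x y xX yY); first by rewrite yZ orbT.
  by move: kZ (cardDZ X x) (cardDZ Y y); rewrite XZ0 cards0 inE yYZ ?add0n ?add1n; lia.
have /setDP[xX xZ] := xXZ.
case: (set_0Vmem (Y :&: Z)) => [YZ0 | [y /setIP[yY yZ]]].
  have /card_gt0P[y yY] : 0 < #|Y| by apply: leq_trans kY.
  have yYZ : y \in Y :\: Z.
    apply/setDP; split=> //; apply/negP => yZ.
    by have := in_set0 y; rewrite -YZ0 inE yY yZ.
  apply: (step x y xX yY); first by rewrite xZ.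
  move: kY (cardDZ X x) (cardDZ Y y).
  by rewrite (cardsD Y) YZ0 cards0 subn0 xXZ yYZ ?add0n ?add1n; lia.
apply: (step x y xX yY); first by rewrite xZ.
by move: kZ (cardDZ X x) (cardDZ Y y); rewrite xXZ inE yZ ?add0n ?add1n; lia.
Qed.

End Matching.

(** * The procedure STAR *)

Section Star.
Variables (n : nat) (mm : rel 'I_n -> {set 'I_n * 'I_n}).
Hypothesis mm_max : forall E, is_max_matching E (mm E).
Variable G : rel 'I_n.
Hypotheses (G_refl : reflexive G) (G_sym : symmetric G).

Definition coG : rel 'I_n := fun x y => ~~ G x y.
Definition starM := mm coG.
Definition starT :=
  [set x in ~: matched starM | [exists e in starM, coG x e.1 && coG x e.2]].
Definition starC := ~: matched starM :\: starT.
Definition starB := [set j in matched starM | [exists k in starC, coG j k]].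
Definition starD := ~: starB.

Lemma STAR_E : STAR mm G =
  if (n - 2 * tB n <= #|starC|) && (n - tB n <= #|starD|) then Some (starC, starD)
  else None.
Proof. by []. Qed.

Lemma coG_sym : symmetric coG.
Proof. by move=> x y; rewrite /coG G_sym. Qed.

Lemma starM_max : is_max_matching coG starM.
Proof. exact: mm_max. Qed.

Lemma starM_matching : matching coG starM.
Proof. exact: max_matching_matching starM_max. Qed.

Lemma starC_unmatched c : c \in starC -> c \notin matched starM.
Proof. by rewrite in_setD in_setC => /andP[]. Qed.

Lemma starT_unmatched v : v \in starT -> v \notin matched starM.
Proof. by rewrite in_set in_setC => /andP[]. Qed.

Lemma starB_matched j : j \in starB -> j \in matched starM.
Proof. by rewrite in_set => /andP[]. Qed.

Lemma starCD_adj c d : c \in starC -> d \in starD -> G c d.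
Proof.
move=> cC; rewrite in_setC in_set negb_and => /orP[dM | /existsPn/(_ c)].
  have [-> | neq_cd] := eqVneq c d; first exact: G_refl.
  have := max_matching_unmatched_edge coG_sym starM_max (starC_unmatched cC) dM neq_cd.
  by rewrite negbK.
by rewrite cC /coG negbK G_sym.
Qed.

Lemma card_starC_starM : #|starC| + 2 * #|starM| <= n.
Proof.
have sub : #|starC| <= #|~: matched starM| by rewrite subset_leq_card ?subsetDl.
have := card_matched starM_matching; have := cardsC (matched starM).
by rewrite card_ord; lia.
Qed.

Lemma star_matching_small M : n - 2 * tB n <= #|starC| ->
  matching coG M -> #|M| <= tB n.
Proof.
move=> bigC /(max_matching_card starM_max) leMM.
by have := card_starC_starM; lia.
Qed.

(* If k1 = k2 then k1 would lie in T, otherwise k1, j, partner j, k2 would be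
   an augmenting path. *)
Lemma starB_partner j : j \in starB -> partner starM j \notin starB.
Proof.
have Mm := starM_matching.
have B_witness i : i \in starB -> exists2 k, k \in starC & coG k i.
  by rewrite in_set => /andP[_ /existsP[k /andP[kC ik]]]; exists k; rewrite // coG_sym.
move=> jB; apply/negP => /B_witness[k2 k2C k2p]; have [k1 k1C k1j] := B_witness j jB.
have [e eM def_e] := partner_edge Mm (starB_matched jB).
have [k1M k2M] := (starC_unmatched k1C, starC_unmatched k2C).
have [eq_k | neq_k] := eqVneq k1 k2.
  move: k2C; rewrite in_setD => /andP[/negP k2T _]; apply: k2T.
  rewrite in_set in_setC k2M; apply/existsP; exists e.
  by rewrite eM -eq_k in k2p *; case: def_e => ->; rewrite /= k1j k2p.
have aug := max_matching_no_augmenting_path coG_sym starM_max eM.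
case: def_e => def_e; rewrite def_e in aug.
  exact: aug k1M k2M neq_k k1j k2p.
by apply: aug k2M k1M _ k2p k1j; rewrite eq_sym.
Qed.

Definition anchor v :=
  if [pick e in starM | coG v e.1 && coG v e.2] is Some e then e.1 else v.

Lemma anchorP v : v \in starT ->
  exists2 e, e \in starM & [/\ coG v e.1, coG v e.2 & anchor v = e.1].
Proof.
rewrite in_set => /andP[_ /existsP[e0 /andP[e0M coG0]]]; rewrite /anchor.
case: pickP => [e /andP[eM /andP[coG1 coG2]] | none]; first by exists e.
by move: (none e0); rewrite /= e0M coG0.
Qed.

Definition escape v := if v \in matched starM then partner starM v else anchor v.

Lemma escape_inj_starT : {in starT &, injective escape}.
Proof.
move=> v w vT wT; rewrite /escape (negbTE (starT_unmatched vT)).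
rewrite (negbTE (starT_unmatched wT)).
have [e eM [coGv1 coGv2 ->]] := anchorP vT; have [e' e'M [_ coGw2 ->]] := anchorP wT.
move=> eq1; have ee' : e = e'.
  apply: (matching_uniq starM_matching eM e'M (incident_fst e)).
  by rewrite eq1 incident_fst.
rewrite -ee' in coGw2; apply/eqP/negPn/negP => neq_vw.
exact: (max_matching_no_augmenting_path coG_sym starM_max eM
  (starT_unmatched vT) (starT_unmatched wT) neq_vw coGv1 coGw2).
Qed.

Section Clique.
Variable H : {set 'I_n}.
Hypothesis H_clique : {in H &, forall x y, G x y}.

Lemma coG_clique x y : x \in H -> coG x y -> y \notin H.
Proof. by move=> xH; apply: contraL => yH; rewrite /coG negbK H_clique. Qed.

Lemma partner_clique v : v \in H -> v \in matched starM -> partner starM v \notin H.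
Proof. by move=> vH vM; apply: coG_clique vH (partner_adj coG_sym starM_matching vM). Qed.

Lemma partner_neq_anchor v w : v \in H -> v \in matched starM -> w \in H ->
  w \in starT -> partner starM v != anchor w.
Proof.
move=> vH vM wH wT; have [e eM [coG1 coG2 ->]] := anchorP wT.
have Mm := starM_matching; have [e' e'M def_e'] := partner_edge Mm vM.
have [e'v e'p] := partner_incident def_e'.
apply/eqP => eq_pv; have ee' : e = e'.
  by apply: (matching_uniq Mm eM e'M (incident_fst e)); rewrite -eq_pv.
move: e'v; rewrite -ee' => /orP[] /eqP ev; [move: coG1 | move: coG2].
  by rewrite ev => /(coG_clique wH); rewrite vH.
by rewrite ev => /(coG_clique wH); rewrite vH.
Qed.

Lemma escape_inj_clique : {in H :&: (matched starM :|: starT) &, injective escape}.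
Proof.
move=> v w /setIP[vH /setUP vMT] /setIP[wH /setUP wMT].
case: (boolP (v \in matched starM)) => [vM | vT];
  case: (boolP (w \in matched starM)) => [wM | wT].
- by rewrite /escape vM wM; apply: partner_inj starM_matching v w vM wM.
- have {}wT : w \in starT by case: wMT => //; rewrite (negbTE wT).
  by rewrite /escape vM (negbTE (starT_unmatched wT)) => /eqP;
    rewrite (negbTE (partner_neq_anchor vH vM wH wT)).
- have {}vT : v \in starT by case: vMT => //; rewrite (negbTE vT).
  by rewrite /escape wM (negbTE (starT_unmatched vT)) => /esym/eqP;
    rewrite (negbTE (partner_neq_anchor wH wM vH vT)).
- apply: escape_inj_starT; first by case: vMT => //; rewrite (negbTE vT).
  by case: wMT => //; rewrite (negbTE wT).
Qed.

Lemma escape_clique v : v \in H -> v \in matched starM :|: starT -> escape v \notin H.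
Proof.
rewrite /escape => vH /setUP[vM | vT]; first by rewrite vM partner_clique.
rewrite (negbTE (starT_unmatched vT)); have [e _ [coG1 _ ->]] := anchorP vT.
exact: coG_clique vH coG1.
Qed.

(* escape maps the members of H outside C injectively out of H. *)
Lemma card_starC_clique : #|H| - #|~: H| <= #|starC :&: H|.
Proof.
set D0 := H :&: (matched starM :|: starT).
have -> : starC :&: H = H :\: D0.
  apply/setP => v; rewrite in_setI in_setD in_setC in_setD in_setI in_setU.
  by case: (v \in H); case: (v \in matched starM); case: (v \in starT).
rewrite cardsD (setIidPr (subsetIl _ _)) leq_sub2l //.
apply: leq_card_in_sub escape_inj_clique _ => v /setIP[vH vMT].
by rewrite in_setC escape_clique.
Qed.

Lemma card_starB_clique : #|starB| <= #|~: H|.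
Proof.
pose g j := if j \in H then partner starM j else j.
apply: (@leq_card_in_sub _ _ g) => [j1 j2 j1B j2B | j jB]; rewrite /g; last first.
  by rewrite in_setC; case: ifP => [jH | /negbT //]; rewrite partner_clique ?starB_matched.
case: ifP => j1H; case: ifP => j2H.
- exact: partner_inj starM_matching j1 j2 (starB_matched j1B) (starB_matched j2B).
- by move=> eq_j; move: (starB_partner j1B); rewrite eq_j j2B.
- by move=> eq_j; move: (starB_partner j2B); rewrite -eq_j j1B.
- by [].
Qed.

End Clique.

End Star.

(** * Reed-Solomon codes *)

Lemma tB_lt n (i : 'I_n) : 3 * tB n < n.
Proof. by rewrite /tB; case: n i => [[] | n _] //=; lia. Qed.

Lemma leq_tB n : n <= 3 * (tB n).+1.
Proof. by rewrite /tB; case: n => //= n; lia. Qed.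

Section ReedSolomon.
Variables (n : nat) (F : finFieldType) (alpha : 'I_n -> F).
Hypothesis alpha_inj : injective alpha.
Local Notation t := (tB n).
Implicit Types d : {ffun 'I_t.+1 -> F}.

Lemma ENC_agree d1 d2 :
  t.+1 <= #|[set j | ENC alpha d1 j == ENC alpha d2 j]| -> d1 = d2.
Proof.
set S := [set j | _] => bigS.
pose q : {poly F} := (\poly_(k < t.+1) (d1 (inord k) - d2 (inord k)))%R.
have q_horner j : (q.[alpha j] = ENC alpha d1 j - ENC alpha d2 j)%R.
  rewrite horner_poly !ffunE -sumrB; apply: eq_bigr => k _.
  by rewrite inord_val mulrBl.
have q0 : q = 0%R.
  apply: (@roots_geq_poly_eq0 _ q (map alpha (enum S))).
  - apply/allP => x /mapP[j]; rewrite mem_enum inE => /eqP eq_j ->.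
    by rewrite /root q_horner eq_j subrr.
  - by rewrite map_inj_uniq ?enum_uniq.
  - by rewrite size_map -cardE (leq_trans (size_poly _ _)).
apply/ffunP => k; apply/eqP; rewrite -subr_eq0.
move/(congr1 (fun p : {poly F} => p`_k)%R): q0.
by rewrite coef_poly ltn_ord inord_val coef0 => ->.
Qed.

Lemma DEC_ENC d (w : {ffun 'I_n -> F}) :
  3 * t < n -> hdist (ENC alpha d) w <= t -> DEC alpha w = d.
Proof.
move=> t_lt_n near_d; rewrite /DEC; case: pickP => [d' near_d' | none]; last first.
  by move: (none d); rewrite /= near_d.
apply: ENC_agree; move: near_d' near_d; rewrite /hdist.
set S' := [set j | _] => near_d'; set S := [set j | _] => near_d.
have agree : ~: (S' :|: S) \subset [set j | ENC alpha d' j == ENC alpha d j].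
  by apply/subsetP => j; rewrite !inE negb_or !negbK => /andP[/eqP -> /eqP ->].
apply: leq_trans (subset_leq_card agree).
have := cardsC (S' :|: S); have := (leq_card_setU S' S).1; rewrite card_ord; lia.
Qed.

End ReedSolomon.

Lemma concat_blocks n b (F : finFieldType) (rep : F -> b.-tuple bool)
  (unrep : b.-tuple bool -> F) : cancel unrep rep ->
  forall x : ((tB n).+1 * b).-tuple bool, concat rep (blocks unrep x) = x.
Proof.
move=> unrepK x; apply: eq_from_tnth => i.
rewrite /concat tnth_mktuple /blocks ffunE unrepK.
have b_gt0 : 0 < b.
  by have := leq_ltn_trans (leq0n i) (ltn_ord i); rewrite muln_gt0 => /andP[].
have ltb : i %% b < b := ltn_pmod _ b_gt0.
have ltq : i %/ b < (tB n).+1 by rewrite ltn_divLR.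
rewrite -[i %% b]/(nat_of_ord (Ordinal ltb)) nth_mktuple /= inordK //.
by rewrite -divn_eq (tnth_nth false).
Qed.

(** * The protocol *)

Section Protocol.
Variables (n b : nat) (F : finFieldType) (alpha : 'I_n -> F)
  (rep : F -> b.-tuple bool) (unrep : b.-tuple bool -> F)
  (mdef : ((tB n).+1 * b).-tuple bool) (mm : rel 'I_n -> {set 'I_n * 'I_n}).
Hypotheses (alpha_inj : injective alpha) (mm_max : forall E, is_max_matching E (mm E)).
Variables (m : 'I_n -> ((tB n).+1 * b).-tuple bool) (Cr : {set 'I_n}) (A : adversary n F).
Hypothesis Cr_small : #|Cr| <= tB n.

Local Notation t := (tB n).
Local Notation share := (share alpha unrep m).
Local Notation adj := (adj alpha unrep m Cr A).
Local Notation Ecal := (Ecal alpha unrep mm m Cr A).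
Local Notation bb := (bb alpha unrep mm m Cr A).
Local Notation majx := (majx alpha unrep mm m Cr A).
Local Notation majv := (majv alpha unrep mm m Cr A).
Local Notation proceed := (proceed alpha unrep mm m Cr A).
Local Notation output := (output alpha rep unrep mdef mm m Cr A).

Lemma exists_honest (S : {set 'I_n}) : t < #|S| -> exists2 v, v \in S & v \notin Cr.
Proof. by move=> bigS; apply: card_lt_exists; apply: leq_ltn_trans bigS. Qed.

Lemma leq_honest (S : {set 'I_n}) k : k + t <= #|S| -> k <= #|S :\: Cr|.
Proof. by move=> bigS; apply: leq_trans (leq_sub_cardsD S Cr); lia. Qed.

Lemma share_agree y z : t < #|[set j | share y j == share z j]| -> share y = share z.
Proof. by move/(ENC_agree alpha_inj) => eq_blocks; rewrite /Defs.share eq_blocks. Qed.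

Lemma adj_refl i : reflexive (adj i).
Proof. by move=> x; rewrite /Defs.adj eqxx. Qed.

Lemma adj_sym i : symmetric (adj i).
Proof. by move=> x y; rewrite /Defs.adj eq_sym andbC. Qed.

Lemma recv2_honest i y z : y \notin Cr -> z \notin Cr ->
  recv2 alpha unrep m Cr A i y z = (share y z == share z z) && (share y y == share z y).
Proof.
by move=> yH zH; rewrite /recv2 (negbTE yH) /vec ffunE /rd /rs /recv1 (negbTE zH).
Qed.

Lemma adj_honest i y z : y \notin Cr -> z \notin Cr -> adj i y z ->
  share y z = share z z /\ share z y = share y y.
Proof.
move=> yH zH; rewrite /Defs.adj !recv2_honest //; case: eqVneq => [<- // | _] /=.
by case/andP => /andP[/eqP -> _] /andP[/eqP -> _].
Qed.

Lemma adj_same_share i y z : y \notin Cr -> z \notin Cr -> share y = share z -> adj i y z.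
Proof. by move=> yH zH eq_yz; rewrite /Defs.adj !recv2_honest // eq_yz !eqxx orbT. Qed.

Definition consistent (S : {set 'I_n}) (c : {ffun 'I_n -> F}) :=
  forall e, e \in S -> e \notin Cr -> share e = c.

Definition Fset i (C : {set 'I_n}) := [set y | t.+1 <= #|[set z in C | adj i y z]|].
Definition Eset i (C : {set 'I_n}) :=
  [set y | (2 * t).+1 <= #|[set z in Fset i C | adj i y z]|].

Lemma Ecal_star i : Ecal i != set0 ->
  [/\ n - 2 * t <= #|starC mm (adj i)|, n - t <= #|starD mm (adj i)|,
      2 * t < #|Ecal i| & Ecal i = Eset i (starC mm (adj i))].
Proof.
rewrite /Defs.Ecal STAR_E; case: ifP => [/andP[bigC bigD] | _]; last by rewrite eqxx.
by case: ifP => [/andP[_ bigE] _ | _]; [split | rewrite eqxx].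
Qed.

Lemma Ecal_matching_small i M : Ecal i != set0 ->
  matching (coG (adj i)) M -> #|M| <= t.
Proof. by case/Ecal_star => bigC _ _ _; apply: star_matching_small. Qed.

Lemma starC_consistent i : n - 2 * t <= #|starC mm (adj i)| ->
  n - t <= #|starD mm (adj i)| ->
  exists2 c0, c0 \notin Cr & consistent (starC mm (adj i)) (share c0).
Proof.
set C := starC mm (adj i) => bigC bigD.
have t_lt_n := tB_lt i.
have [c0 c0C c0H] : exists2 c0, c0 \in C & c0 \notin Cr.
  by apply: exists_honest; apply: leq_trans bigC; lia.
exists c0 => // c cC cH; apply: share_agree.
have CD := starCD_adj mm_max (adj_refl i) (adj_sym i).
have honestD : t < #|starD mm (adj i) :\: Cr|.
  by apply: leq_honest; apply: leq_trans bigD; lia.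
apply: leq_trans honestD (subset_leq_card _).
apply/subsetP => d /setDP[dD dH]; rewrite inE.
have [-> _] := adj_honest cH dH (CD c d cC dD).
by have [-> _] := adj_honest c0H dH (CD c0 d c0C dD).
Qed.

Lemma Fset_consistent i C c : consistent C c ->
  forall f, f \in Fset i C -> f \notin Cr -> share f f = c f.
Proof.
move=> Cc f; rewrite inE => /exists_honest[c' /setIdP[c'C fc'] c'H] fH.
by have [_ <-] := adj_honest fH c'H fc'; rewrite (Cc c' c'C c'H).
Qed.

Lemma Eset_consistent i C c0 :
  (forall f, f \in Fset i C -> f \notin Cr -> share f f = share c0 f) ->
  consistent (Eset i C) (share c0).
Proof.
move=> Fc e; rewrite inE => bigN eH; apply: share_agree.
have honestN : t < #|[set z in Fset i C | adj i e z] :\: Cr|.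
  by apply: leq_honest; apply: leq_trans bigN; lia.
apply: leq_trans honestN (subset_leq_card _).
apply/subsetP => f /setDP[/setIdP[fF ef] fH].
by rewrite inE; have [-> _] := adj_honest eH fH ef; rewrite Fc.
Qed.

Lemma Ecal_consistent i : Ecal i != set0 ->
  exists2 c0, c0 \notin Cr & consistent (Ecal i) (share c0).
Proof.
case/Ecal_star => bigC bigD _ ->.
have [c0 c0H Cc0] := starC_consistent bigC bigD.
by exists c0 => //; apply: Eset_consistent; apply: Fset_consistent Cc0.
Qed.

Lemma consistent_share_eq i S1 S2 c1 c2 :
  (forall M, matching (coG (adj i)) M -> #|M| <= t) ->
  consistent S1 (share c1) -> consistent S2 (share c2) ->
  2 * t < #|S1| -> 2 * t < #|S2| -> share c1 = share c2.
Proof.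
move=> small S1c S2c big1 big2; apply/eqP/negPn/negP => neq12.
pose Z : {set 'I_n} := [set j | share c1 j == share c2 j].
have smallZ : #|Z| <= t by rewrite leqNgt; apply: contra neq12 => /share_agree ->.
have big1H : t < #|S1 :\: Cr| by apply: leq_honest; apply: leq_trans big1; lia.
have big2H : t < #|S2 :\: Cr| by apply: leq_honest; apply: leq_trans big2; lia.
have d12 : [disjoint S1 :\: Cr & S2 :\: Cr].
  rewrite -setI_eq0; apply/eqP/setP => v; rewrite !inE.
  apply/negbTE/andP => -[/andP[vH v1] /andP[_ v2]].
  by rewrite -(S1c v v1 vH) -(S2c v v2 vH) eqxx in neq12.
have co12 : {in S1 :\: Cr & S2 :\: Cr,
    forall p q, (p \notin Z) || (q \notin Z) -> coG (adj i) p q}.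
  move=> p q /setDP[p1 pH] /setDP[q2 qH]; rewrite -negb_and; apply: contra => adj_pq.
  have [e1 e2] := adj_honest pH qH adj_pq.
  by rewrite !inE -(S1c p p1 pH) -(S2c q q2 qH) e1 e2 !eqxx.
have [|M Mm [cardM _]] := matching_across (coG_sym (adj_sym i)) d12 co12 big1H big2H.
  by have := leq_cardsD_disjoint Z d12; lia.
by have := small M Mm; rewrite cardM ltnn.
Qed.

Lemma bb_honest x : x \notin Cr -> bb x = (Ecal x != set0).
Proof. by move=> xH; rewrite /Defs.bb (negbTE xH). Qed.

Lemma majx_honest i x c0 : x \notin Cr -> Ecal x != set0 ->
  consistent (Ecal x) (share c0) -> majx i x = Some (share c0 i).
Proof.
move=> xH Ex_ne Exc; have [_ _ bigE _] := Ecal_star Ex_ne.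
rewrite /Defs.majx /recv5 (negbTE xH) /send5 /bit Ex_ne /=; apply: pick_majority.
have honestE : (#|Ecal x| + 2) %/ 2 <= #|Ecal x :\: Cr| by apply: leq_honest; lia.
apply: leq_trans honestE (subset_leq_card _); apply/subsetP => j /setDP[jE jH].
by rewrite inE jE /rs /recv1 (negbTE jH) /= (Exc j jE jH) eqxx.
Qed.

Lemma majv_honest i c : (forall x, x \notin Cr -> bb x -> majx i x = Some c) ->
  t < #|[set x | bb x] :\: Cr| -> majv i = Some c.
Proof.
move=> maj_c big; rewrite /Defs.majv.
have sup_c : t < #|[set x | bb x && (majx i x == Some c)]|.
  apply: leq_trans big (subset_leq_card _); apply/subsetP => x /setDP[].
  by rewrite !inE => bx xH; rewrite bx maj_c ?eqxx.
case: pickP => [v /exists_honest[x] | none]; last by move: (none c); rewrite /= sup_c.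
by rewrite inE => /andP[bx /eqP] + xH; rewrite maj_c // => -[->].
Qed.

Lemma proceed_output : proceed -> exists2 c0, c0 \notin Cr &
  forall i, i \notin Cr -> output i = concat rep (blocks unrep (m c0)).
Proof.
move=> pr.
have honest_bb : t < #|[set x | bb x] :\: Cr|.
  by apply: leq_honest; apply: leq_trans pr; lia.
have [x0 /setDP[]] := exists_honest honest_bb; rewrite inE => + x0H.
rewrite bb_honest // => Ex0_ne; have [c0 c0H Ex0c] := Ecal_consistent Ex0_ne.
have maj i x : x \notin Cr -> bb x -> majx i x = Some (share c0 i).
  move=> xH; rewrite bb_honest // => Ex_ne.
  have [cx cxH Excx] := Ecal_consistent Ex_ne.
  have [[_ _ bigE0 _] [_ _ bigEx _]] := (Ecal_star Ex0_ne, Ecal_star Ex_ne).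
  have small := Ecal_matching_small Ex0_ne.
  by rewrite (consistent_share_eq small Ex0c Excx bigE0 bigEx); apply: majx_honest.
exists c0 => // i iH; rewrite /Defs.output pr; congr concat.
apply: (DEC_ENC alpha_inj (tB_lt i)); apply: leq_trans Cr_small.
apply: subset_leq_card; apply/subsetP => j; rewrite inE; apply: contraR => jH.
by rewrite [X in _ == X]ffunE /recv6 (negbTE jH) /send6 pr (majv_honest (maj j)).
Qed.

Lemma agreement i j : i \notin Cr -> j \notin Cr -> output i = output j.
Proof.
move=> iH jH; have [pr | npr] := boolP proceed; last by rewrite /Defs.output !ifN.
by have [c0 _ out] := proceed_output pr; rewrite !out.
Qed.

Section Validity.
Variable m0 : ((tB n).+1 * b).-tuple bool.
Hypothesis honest_inputs : forall i, i \notin Cr -> m i = m0.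

Lemma card_honest : #|~: Cr| = n - #|Cr|.
Proof. by rewrite cardsCs setCK card_ord. Qed.

Lemma valid_clique i : {in ~: Cr &, forall y z, adj i y z}.
Proof.
move=> y z; rewrite !in_setC => yH zH.
by apply: adj_same_share; rewrite // /Defs.share !honest_inputs.
Qed.

Lemma valid_star i :
  [/\ n - 2 * t <= #|starC mm (adj i)|, n - t <= #|starD mm (adj i)|
    & t < #|starC mm (adj i) :&: ~: Cr|].
Proof.
have bigCH := card_starC_clique mm_max (adj_sym i) (valid_clique i).
have smallB := card_starB_clique mm_max (adj_sym i) (valid_clique i).
rewrite setCK card_honest in bigCH smallB.
have t_lt_n := tB_lt i.
split.
- apply: leq_trans (subset_leq_card (subsetIl _ (~: Cr))); apply: leq_trans bigCH; lia.
- by rewrite /starD cardsCs setCK card_ord leq_sub2l // (leq_trans smallB).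
- by apply: leq_trans bigCH; lia.
Qed.

Lemma valid_Ecal i : i \notin Cr -> Ecal i != set0.
Proof.
move=> iH; have [bigC bigD bigCH] := valid_star i.
have t_lt_n := tB_lt i.
set C := starC mm (adj i) in bigC bigCH *.
have honestF : ~: Cr \subset Fset i C.
  apply/subsetP => h hH; rewrite inE; apply: leq_trans bigCH (subset_leq_card _).
  by apply/subsetP => z /setIP[zC zH]; rewrite inE zC valid_clique.
have honestE : ~: Cr \subset Eset i C.
  apply/subsetP => h hH; rewrite inE.
  apply: leq_trans (subset_leq_card (_ : ~: Cr \subset _)).
    by rewrite card_honest; lia.
  by apply/subsetP => z zH; rewrite inE (subsetP honestF) ?valid_clique.
have bigF : 2 * t < #|Fset i C|.
  by apply: leq_trans (subset_leq_card honestF); rewrite card_honest; lia.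
have bigE : 2 * t < #|Eset i C|.
  by apply: leq_trans (subset_leq_card honestE); rewrite card_honest; lia.
have -> : Ecal i = Eset i C.
  by rewrite /Defs.Ecal STAR_E -/C bigC bigD /= -/(Fset i C) -/(Eset i C) bigF bigE.
by apply/set0Pn; exists i; apply: (subsetP honestE); rewrite in_setC.
Qed.

Lemma valid_proceed (i : 'I_n) : proceed.
Proof.
have t_lt_n := tB_lt i.
apply: leq_trans (subset_leq_card (_ : ~: Cr \subset _)); first by rewrite card_honest; lia.
by apply/subsetP => x; rewrite in_setC => xH; rewrite inE bb_honest ?valid_Ecal.
Qed.

End Validity.

Hypothesis unrepK : cancel unrep rep.

Lemma validity m0 : (forall i, i \notin Cr -> m i = m0) ->
  forall i, i \notin Cr -> output i = m0.
Proof.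
move=> honest_inputs i iH.
have [c0 c0H out] := proceed_output (valid_proceed honest_inputs i).
by rewrite out // honest_inputs // concat_blocks.
Qed.

End Protocol.

Lemma comm_cost_le n b B1 (F : finFieldType) (alpha : 'I_n -> F)
  (unrep : b.-tuple bool -> F) (mm : rel 'I_n -> {set 'I_n * 'I_n})
  (m : 'I_n -> ((tB n).+1 * b).-tuple bool) (Cr : {set 'I_n}) (A : adversary n F) :
  comm_cost alpha unrep mm m Cr A B1 <= n * B1 + n * (n * (3 * b + 2 * n)).
Proof.
have bits i : honest_bits alpha unrep mm m Cr A i <= n * (3 * b + 2 * n).
  by rewrite /honest_bits; case: send5 => [_|]; case: send6 => [_|]; nia.
rewrite /comm_cost leq_add2l.
apply: leq_trans (_ : _ <= \sum_(i in ~: Cr) n * (3 * b + 2 * n)) _.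
  by apply: leq_sum => i _; apply: bits.
by rewrite sum_nat_const leq_mul2r -[X in _ <= X]card_ord max_card orbT.
Qed.

Theorem mainTheorem10 :
  exists K : nat,
  forall (n b B1 : nat) (F : finFieldType) (alpha : 'I_n -> F)
         (rep : F -> b.-tuple bool) (unrep : b.-tuple bool -> F)
         (mdef : ((tB n).+1 * b).-tuple bool)
         (mm : rel 'I_n -> {set 'I_n * 'I_n}),
    injective alpha -> cancel rep unrep -> cancel unrep rep ->
    (forall E : rel 'I_n, is_max_matching E (mm E)) ->
  forall (m : 'I_n -> ((tB n).+1 * b).-tuple bool) (Cr : {set 'I_n})
         (A : adversary n F),
    #|Cr| <= tB n ->
    (* Agreement *)
    (forall i j, i \notin Cr -> j \notin Cr ->
       output alpha rep unrep mdef mm m Cr A i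
       = output alpha rep unrep mdef mm m Cr A j) /\
    (* Validity *)
    (forall m0, (forall i, i \notin Cr -> m i = m0) ->
       forall i, i \notin Cr -> output alpha rep unrep mdef mm m Cr A i = m0) /\
    (* Communication complexity O(n l + n^3 + n B(1)), l = (t+1) b *)
    comm_cost alpha unrep mm m Cr A B1
      <= K * (n * ((tB n).+1 * b) + n ^ 3 + n * B1).
Proof.
exists 9 => n b B1 F alpha rep unrep mdef mm alpha_inj _ unrepK mm_max m Cr A Cr_small.
split; [exact: agreement | split; first exact: validity].
apply: leq_trans (comm_cost_le _ _ _ _ _ _ _) _.
by have := leq_tB n; nia.
Qed.
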